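(* A game $G=(T,A)$ is weakly finitely small in $\mathbf{Games}_A$ if and only if $G$ is finite and trivial for Alice, i.e. $\mathrm{Run}(T)$ is finite and $A=\mathrm{Run}(T)$.
   Context: A game tree is $T\subseteq M^{<\omega}$ (some set $M$) closed under initial segments such that every $t\in T$ has an extension $t^\frown x\in T$; $|t|$ is the length, $t\restriction k$ the initial segment of length $k$. $\mathrm{Run}(T)=\{R\in M^\omega:R\restriction n\in T\ \forall n\}$. A game is $(T,A)$ with $A\subseteq\mathrm{Run}(T)$. A chronological map $f\colon T_1\to T_2$ satisfies $|f(t)|=|t|$ and $f(t\restriction k)=f(t)\restriction k$, inducing $\bar f$ on runs via $\bar f(R)\restriction n=f(R\restriction n)$. $\mathbf{Games}_A$ is the category of games whose morphisms $(T_1,A_1)\to(T_2,A_2)$ are chronological maps $f$ with $\bar f[A_1]\subseteq A_2$ (A-morphisms). $\omega$ is a category via its order. A game $G$ is weakly finitely small in $\mathbf{Games}_A$ if for every functor $S\colon\omega\to\mathbf{Games}_A$ with colimit cocone $(q_n\colon S(n)\to L)_{n<\omega}$ in $\mathbf{Games}_A$ and every A-morphism $f\colon G\to L$ there are $n<\omega$ and an A-morphism $\tilde f\colon G\to S(n)$ with $q_n\circ\tilde f=f$. *)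

From Stdlib Require List.
From mathcomp Require Import all_boot.
Set Implicit Arguments. Unset Strict Implicit. Unset Printing Implicit Defensive.


Definition restr (M : Type) (R : nat -> M) (n : nat) : seq M := mkseq R n.

Definition isRun (M : Type) (T : seq M -> Prop) (R : nat -> M) : Prop :=
  forall n, T (restr R n).

Record game := Game {
  gM : Type;
  gT : seq gM -> Prop;
  gT_pref : forall t k, gT t -> gT (take k t);
  gT_ext : forall t, gT t -> exists x, gT (rcons t x);
  gA : (nat -> gM) -> Prop;
  gA_run : forall R, gA R -> isRun gT R
}.
Arguments gT : clear implicits.
Arguments gA : clear implicits.

(* The map is given as a function on all of seq (gM G1); only its values on T1
   matter (morphisms are identified when they agree on T1, see [hom_eq]). *)
Record hom (G1 G2 : game) := Hom {
  hfun : seq (gM G1) -> seq (gM G2);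
  hom_T : forall t, gT G1 t -> gT G2 (hfun t);
  hom_size : forall t, gT G1 t -> size (hfun t) = size t;
  hom_pref : forall t k, gT G1 t -> hfun (take k t) = take k (hfun t);
  hom_A : forall R, gA G1 R ->
     exists R', gA G2 R' /\ forall n, hfun (restr R n) = restr R' n
}.

Definition hom_eq (G1 G2 : game) (f g : hom G1 G2) : Prop :=
  forall t, gT G1 t -> hfun f t = hfun g t.

Definition comp_eq (G1 G2 G3 : game) (f : hom G1 G2) (g : hom G2 G3) (h : hom G1 G3) : Prop :=
  forall t, gT G1 t -> hfun g (hfun f t) = hfun h t.

Record chain := Chain {
  cobj : nat -> game;
  cmap : forall n m, n <= m -> hom (cobj n) (cobj m);
  cmap_id : forall n (h : n <= n) t, gT (cobj n) t -> hfun (@cmap n n h) t = t;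
  cmap_comp : forall n m p (hnm : n <= m) (hmp : m <= p) (hnp : n <= p),
      comp_eq (@cmap n m hnm) (@cmap m p hmp) (@cmap n p hnp)
}.

Definition cocone (S : chain) (X : game) (q : forall n, hom (cobj S n) X) : Prop :=
  forall n m (hnm : n <= m), comp_eq (@cmap S n m hnm) (q m) (q n).

Definition is_colimit (S : chain) (L : game) (q : forall n, hom (cobj S n) L) : Prop :=
  cocone q /\
  forall (X : game) (c : forall n, hom (cobj S n) X), cocone c ->
    (exists u : hom L X, forall n, comp_eq (q n) u (c n)) /\
    (forall u1 u2 : hom L X, (forall n, comp_eq (q n) u1 (c n)) ->
        (forall n, comp_eq (q n) u2 (c n)) -> hom_eq u1 u2).

Definition weakly_finitely_small (G : game) : Prop :=
  forall (S : chain) (L : game) (q : forall n, hom (cobj S n) L),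
    is_colimit q ->
    forall f : hom G L, exists n (ft : hom G (cobj S n)), comp_eq ft (q n) f.

Definition finite_runs (G : game) : Prop :=
  exists s : seq (nat -> gM G), forall R, isRun (gT G) R -> List.In R s.

Definition trivial_for_Alice (G : game) : Prop :=
  forall R, isRun (gT G) R -> gA G R.

From mathcomp Require Import all_boot.
From Stdlib Require Import Classical ClassicalEpsilon FunctionalExtensionality PropExtensionality.
Set Implicit Arguments. Unset Strict Implicit. Unset Printing Implicit Defensive.

(* A weakly finitely small game is trivial for Alice: if a run [R0] is lost, the map recording
   whether a node has already left [R0] sends the game into the colimit of the chain of alarm
   games, where stage [n] forces the alarm from time [n] on, and it cannot factor through any
   stage since [R0] never raises the alarm. It also has finitely many runs: otherwise pick
   distinct runs [F 0, F 1, ...] and let stage [n] make every run winning except [F n, F n.+1, ...];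
   the identity into the union factors through no stage.

   Conversely, two facts hold for every colimit cocone in Games_A: a winning run of the colimit
   is the image of a winning run of some stage, and nodes with the same image are identified at
   some later stage. Both are read off an explicit colimit whose moves are classes of stage
   nodes. If the game has finitely many runs, all winning, lift each run to a winning run of a
   stage and move to a stage beyond which lifts of runs sharing a prefix agree on that prefix;
   there the lifts assemble into a factorization. *)

Lemma eq_in_mkseq (T : Type) (f g : nat -> T) n :
  (forall i, i < n -> f i = g i) -> mkseq f n = mkseq g n.
Proof. by move=> efg; apply/eq_in_map => i; rewrite mem_iota add0n => /efg. Qed.

Lemma take_mkseq (T : Type) (f : nat -> T) k n : take k (mkseq f n) = mkseq f (minn k n).
Proof. by rewrite /mkseq -map_take take_iota. Qed.

Section Restriction.
Variable M : Type.
Implicit Types R : nat -> M.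

Lemma size_restr R n : size (restr R n) = n.
Proof. exact: size_mkseq. Qed.

Lemma take_restr R k n : take k (restr R n) = restr R (minn k n).
Proof. exact: take_mkseq. Qed.

Lemma take_restrl R k n : k <= n -> take k (restr R n) = restr R k.
Proof. by move=> le_kn; rewrite take_restr (minn_idPl le_kn). Qed.

Lemma restr_eq_nth R1 R2 n i : restr R1 n = restr R2 n -> i < n -> R1 i = R2 i.
Proof. by move=> e lt_in; have := congr1 (nth (R1 i) ^~ i) e; rewrite !nth_mkseq. Qed.

Lemma restr_inj R1 R2 : (forall n, restr R1 n = restr R2 n) -> R1 = R2.
Proof. by move=> e; apply: functional_extensionality => i; apply: (restr_eq_nth (e i.+1)). Qed.

End Restriction.

Definition asbool (P : Prop) : bool := if excluded_middle_informative P then true else false.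

Lemma asboolP (P : Prop) : reflect P (asbool P).
Proof. by rewrite /asbool; case: excluded_middle_informative => h; constructor. Qed.

Lemma restr_agree_max (M : Type) (R1 R2 : nat -> M) : R1 <> R2 ->
  exists d0, restr R1 d0 = restr R2 d0 /\ forall d, restr R1 d = restr R2 d -> d <= d0.
Proof.
move=> neq; have [k neq_k] : exists k, R1 k <> R2 k.
  by apply: NNPP => /(not_ex_not_all _ _) eR; apply/neq/functional_extensionality.
have differ : exists k, asbool (R1 k <> R2 k) by exists k; apply/asboolP.
case: (ex_minnP differ) => d0 /asboolP neq0 min0; exists d0; split=> [|d e].
  by apply: eq_in_mkseq => i lt_id; apply: NNPP => /asboolP /min0; rewrite leqNgt lt_id.
by rewrite leqNgt; apply/negP => /(restr_eq_nth e).
Qed.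

Definition eventually (P : nat -> Prop) : Prop := exists m, forall m', m <= m' -> P m'.

Lemma eventually_and (P Q : nat -> Prop) :
  eventually P -> eventually Q -> eventually (fun m => P m /\ Q m).
Proof.
move=> [m1 P_m1] [m2 Q_m2]; exists (maxn m1 m2) => m; rewrite geq_max => /andP[le1 le2].
by split; [apply: P_m1 | apply: Q_m2].
Qed.

Lemma eventually_all_in (T : Type) (s : seq T) (Q : T -> nat -> Prop) :
  (forall a, List.In a s -> eventually (Q a)) -> eventually (fun m => forall a, List.In a s -> Q a m).
Proof.
elim: s => [|a s IHs] ev_s; first by exists 0.
have [m Qm] := eventually_and (ev_s a (or_introl erefl)) (IHs (fun b sb => ev_s b (or_intror sb))).
by exists m => m' /Qm [Qa Qs] b [<-|/Qs].
Qed.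

Definition hom_comp (G1 G2 G3 : game) (f : hom G1 G2) (g : hom G2 G3) : hom G1 G3.
Proof.
refine (@Hom G1 G3 (fun t => hfun g (hfun f t)) _ _ _ _).
- by move=> t /(hom_T f) /(hom_T g).
- by move=> t ht; rewrite (hom_size g (hom_T f ht)) (hom_size f ht).
- by move=> t k ht; rewrite (hom_pref f k ht) (hom_pref g k (hom_T f ht)).
- move=> R /(hom_A f) [R1 [/(hom_A g) [R2 [AR2 e2]] e1]].
  by exists R2; split => // k; rewrite e1 e2.
Defined.

Definition hom_id (G : game) : hom G G.
Proof. by refine (@Hom G G id _ _ _ _) => // R AR; exists R. Defined.

Section NodeOnRun.
Variables (G : game) (t : seq (gM G)).
Hypothesis t_node : gT G t.

Let x0 : gM G := proj1_sig (constructive_indefinite_description _ (gT_ext t_node)).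
Let step (s : seq (gM G)) : gM G := epsilon (inhabits x0) (fun x => gT G (rcons s x)).

Fixpoint walk k := if k is k'.+1 then rcons (walk k') (step (walk k')) else t.

Lemma walk_node k : gT G (walk k).
Proof. by elim: k => //= k /gT_ext; apply: epsilon_spec. Qed.

Lemma size_walk k : size (walk k) = size t + k.
Proof. by elim: k => [|k IHk] /=; rewrite ?addn0 // size_rcons IHk addnS. Qed.

Lemma take_walk k k' : k <= k' -> take (size t + k) (walk k') = walk k.
Proof.
elim: k' => [|k' IHk']; first by rewrite leqn0 => /eqP -> /=; rewrite addn0 take_size.
rewrite leq_eqVlt => /orP[/eqP ->|lt_kk']; first by rewrite -size_walk take_size.
by rewrite /= -cats1 takel_cat ?size_walk ?leq_add2l // IHk'.
Qed.

Lemma node_on_run : exists R, isRun (gT G) R /\ restr R (size t) = t.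
Proof.
pose R i := nth x0 (walk i.+1) i.
have restr_R n : restr R n = take n (walk n).
  have le_n : n <= size (walk n) by rewrite size_walk leq_addl.
  rewrite -[take n _](mkseq_nth x0) size_takel //; apply: eq_in_mkseq => i lt_in.
  rewrite nth_take // /R -(@take_walk i.+1 n) // nth_take //.
  by rewrite addnS ltnS leq_addl.
exists R; split => [n|]; first by rewrite restr_R; apply/gT_pref/walk_node.
by rewrite restr_R -[X in take X _]addn0 take_walk.
Qed.

End NodeOnRun.

Section InjectiveSequence.
Variables (X : Type) (P : X -> Prop).
Hypothesis P_infinite : ~ exists s : seq X, forall x, P x -> List.In x s.

Lemma exists_fresh (s : seq X) : exists x, P x /\ ~ List.In x s.
Proof.
apply: NNPP => no_fresh; apply: P_infinite; exists s => x Px.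
by apply: NNPP => x_fresh; apply: no_fresh; exists x.
Qed.

Let fresh (s : seq X) : X := proj1_sig (constructive_indefinite_description _ (exists_fresh s)).

Fixpoint drawn n : seq X := if n is n'.+1 then fresh (drawn n') :: drawn n' else [::].

Lemma infinite_injective : exists F : nat -> X, (forall n, P (F n)) /\ injective F.
Proof.
have freshP s : P (fresh s) /\ ~ List.In (fresh s) s.
  exact: proj2_sig (constructive_indefinite_description _ (exists_fresh s)).
pose F n := fresh (drawn n).
have drawnF k n : k < n -> List.In (F k) (drawn n).
  by elim: n => // n IHn; rewrite ltnS leq_eqVlt => /orP[/eqP ->|/IHn]; [left | right].
have F_neq k n : k < n -> F k <> F n.
  by move=> /drawnF + e; rewrite e; apply: (freshP _).2.
exists F; split=> [n|k n eF]; first exact: (freshP _).1.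
by case: (ltngtP k n) => [/F_neq/(_ eF) []|/F_neq/(_ (esym eF)) []|].
Qed.

End InjectiveSequence.

Section InclusionChain.
Variables (M : Type) (T : nat -> seq M -> Prop) (A : nat -> (nat -> M) -> Prop).
Hypothesis T_pref : forall n t k, T n t -> T n (take k t).
Hypothesis T_ext : forall n t, T n t -> exists x, T n (rcons t x).
Hypothesis A_run : forall n R, A n R -> isRun (T n) R.
Hypothesis T_mono : forall n m t, n <= m -> T n t -> T m t.
Hypothesis A_mono : forall n m R, n <= m -> A n R -> A m R.
Hypothesis T_size : forall n t, T n t -> T (size t) t.

Definition incl_stage n : game := Game (@T_pref n) (@T_ext n) (@A_run n).

Definition incl_map n m (le_nm : n <= m) : hom (incl_stage n) (incl_stage m).
Proof.
refine (@Hom (incl_stage n) (incl_stage m) id _ _ _ _) => //=.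
- by move=> t; apply: T_mono.
- by move=> R AR; exists R; split => //; apply: A_mono AR.
Defined.

Definition incl_chain : chain := @Chain incl_stage incl_map (fun _ _ _ _ => erefl)
  (fun _ _ _ _ _ _ _ _ => erefl).

(* By [T_mono] and [T_size], [t] lies in some stage iff it lies in stage [size t]. *)
Definition union_tree (t : seq M) : Prop := T (size t) t.
Definition union_win (R : nat -> M) : Prop := exists n, A n R.

Lemma union_tree_pref t k : union_tree t -> union_tree (take k t).
Proof. by move=> /(T_pref k) /T_size. Qed.

Lemma union_tree_ext t : union_tree t -> exists x, union_tree (rcons t x).
Proof. by move=> /T_ext [x tx]; exists x; rewrite /union_tree size_rcons; apply: T_mono tx. Qed.

Lemma union_win_run R : union_win R -> isRun union_tree R.
Proof. by move=> [n /A_run runR] k; have := T_size (runR k); rewrite /union_tree. Qed.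

Definition union_game : game := Game union_tree_pref union_tree_ext union_win_run.

Definition incl_union n : hom (incl_stage n) union_game.
Proof.
refine (@Hom (incl_stage n) union_game id _ _ _ _) => //=.
- by move=> t; apply: T_size.
- by move=> R AR; exists R; split => //; exists n.
Defined.

Lemma incl_union_colimit : @is_colimit incl_chain union_game incl_union.
Proof.
split=> // X c c_cocone.
have c_compat a b t : T a t -> T b t -> hfun (c a) t = hfun (c b) t.
  move=> ta tb; case: (leqP a b) => [le_ab|/ltnW le_ba]; last exact: c_cocone.
  by rewrite -(c_cocone _ _ le_ab t ta).
split.
- unshelve eexists.
  + refine (@Hom union_game X (fun t => hfun (c (size t)) t) _ _ _ _) => /=.
    * by move=> t tt; apply: (hom_T (c (size t)) tt).
    * by move=> t tt; apply: (hom_size (c (size t)) tt).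
    * move=> t k tt; rewrite -(hom_pref (c (size t))) //.
      by apply: c_compat; [apply: T_size (T_pref k tt) | apply: T_pref tt].
    * move=> R [n /[dup] AR /(hom_A (c n)) [R' [AR' e]]].
      exists R'; split => // k; rewrite -e; apply: c_compat; last exact: A_run AR k.
      by have := T_size (A_run AR k); rewrite size_restr.
  + by move=> n t tt; apply: c_compat (T_size tt) tt.
- move=> u1 u2 e1 e2 t tt.
  by rewrite -[t]/(hfun (incl_union (size t)) t) (e1 _ t tt) (e2 _ t tt).
Qed.

Lemma wfs_hom_into_stage (G : game) : weakly_finitely_small G -> forall f : hom G union_game,
  exists n, (forall t, gT G t -> T n (hfun f t)) /\
    (forall R, gA G R -> exists R', A n R' /\ forall k, hfun f (restr R k) = restr R' k).
Proof.
move=> wfsG f; have [n [ft ft_f]] := wfsG _ _ _ incl_union_colimit f.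
exists n; split=> [t tt|R AR]; first by rewrite -(ft_f t tt); apply: (hom_T ft).
have [R' [AR' e]] := hom_A ft AR.
by exists R'; split => // k; rewrite -(ft_f _ (gA_run AR k)); apply: e.
Qed.

End InclusionChain.

(* [alarm n s]: once raised the alarm stays raised, and from position [n] on it is raised. *)
Definition alarm (n : nat) (s : seq bool) : Prop :=
  forall i j, j < size s -> i <= j -> nth true s i || (n <= i) -> nth true s j.

Lemma alarm_pref n s k : alarm n s -> alarm n (take k s).
Proof.
move=> al i j; rewrite size_take_min leq_min => /andP[lt_jk lt_js] le_ij.
by rewrite !nth_take //; [apply: al | apply: leq_ltn_trans lt_jk].
Qed.

Lemma alarm_ext n s : alarm n s -> exists x, alarm n (rcons s x).
Proof.
move=> al; exists true => i j; rewrite size_rcons ltnS leq_eqVlt.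
case/orP=> [/eqP ->|lt_js] le_ij; first by rewrite [nth _ _ (size s)]nth_rcons ltnn eqxx.
by rewrite !nth_rcons lt_js (leq_ltn_trans le_ij lt_js); apply: al.
Qed.

Lemma alarm_mono n m s : n <= m -> alarm n s -> alarm m s.
Proof.
move=> le_nm al i j lt_js le_ij si; apply: (al i j) => //.
by case/orP: si => [-> //|le_mi]; rewrite (leq_trans le_nm le_mi) orbT.
Qed.

Lemma alarm_size n s : alarm n s -> alarm (size s) s.
Proof.
move=> al i j lt_js le_ij /orP[si|le_si]; first by apply: (al i j) => //; rewrite si.
by have := leq_ltn_trans le_si (leq_ltn_trans le_ij lt_js); rewrite ltnn.
Qed.

Definition alarm_game : game :=
  union_game alarm_pref alarm_ext (fun n R (runR : isRun (alarm n) R) => runR) alarm_mono alarm_size.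

Section NotTrivial.
Variables (G : game) (R0 : nat -> gM G).
Hypotheses (R0_run : isRun (gT G) R0) (R0_lost : ~ gA G R0).

Definition off_R0 (s : seq (gM G)) : bool := ~~ asbool (s = restr R0 (size s)).

Lemma off_R0_take s i j : i <= j -> off_R0 (take i s) -> off_R0 (take j s).
Proof.
move=> le_ij; apply: contra => /asboolP e; apply/asboolP.
by have := congr1 (take i) e; rewrite take_takel // take_restr => ->; rewrite size_restr.
Qed.

Definition alarm_of (t : seq (gM G)) : seq bool := mkseq (fun i => off_R0 (take i.+1 t)) (size t).

Lemma alarm_of_size t : alarm (size t) (alarm_of t).
Proof.
move=> i j; rewrite size_mkseq => lt_jt le_ij.
rewrite !nth_mkseq ?(leq_ltn_trans le_ij) // => /orP[|le_ti]; first exact: off_R0_take.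
by have := leq_ltn_trans le_ti (leq_ltn_trans le_ij lt_jt); rewrite ltnn.
Qed.

Definition alarm_hom : hom G alarm_game.
Proof.
refine (@Hom G alarm_game alarm_of _ _ _ _) => /=.
- by move=> t _; rewrite /union_tree size_mkseq; apply: alarm_of_size.
- by move=> t _; apply: size_mkseq.
- move=> t k _; rewrite /alarm_of take_mkseq size_take_min.
  by apply: eq_in_mkseq => i; rewrite leq_min => /andP[lt_ik _]; rewrite take_takel.
- move=> R AR; exists (fun i => off_R0 (restr R i.+1)); split; last first.
    by move=> k; rewrite /alarm_of size_restr; apply: eq_in_mkseq => i lt_ik; rewrite take_restrl.
  have [k0 R_k0] : exists k0, R k0 <> R0 k0.
    apply: NNPP => /(not_ex_not_all _ _) eR; apply: R0_lost.
    by rewrite -(functional_extensionality _ _ eR).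
  exists k0.+1 => n i j; rewrite size_restr => lt_jn le_ij.
  rewrite /restr !nth_mkseq ?(leq_ltn_trans le_ij) //.
  have off_mono a b : a <= b -> off_R0 (restr R a.+1) -> off_R0 (restr R b.+1).
    move=> le_ab; rewrite -(take_restrl R (leqnn b.+1)) -(take_restrl R (le_ab : a.+1 <= b.+1)).
    exact: off_R0_take.
  case/orP=> [|lt_k0i]; first exact: off_mono.
  apply: (off_mono k0); first by apply: leq_trans (leqnSn _) (leq_trans lt_k0i le_ij).
  by apply/negP => /asboolP; rewrite size_restr => /restr_eq_nth/(_ (ltnSn k0)).
Defined.

Lemma not_trivial_not_wfs : ~ weakly_finitely_small G.
Proof.
have win_mono n m R : n <= m -> isRun (alarm n) R -> isRun (alarm m) R.
  by move=> le_nm runR k; apply: alarm_mono le_nm (runR k).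
move=> /(wfs_hom_into_stage win_mono) /(_ alarm_hom) [n [alarmT _]].
have := alarmT _ (R0_run n.+1) n n.
rewrite -[hfun alarm_hom _]/(alarm_of _) /alarm_of size_mkseq size_restr nth_mkseq //.
move=> /(_ (ltnSn n) (leqnn n)); rewrite leqnn orbT => /(_ isT) /negP; apply.
by apply/asboolP; rewrite take_restrl // size_restr.
Qed.

End NotTrivial.

Lemma wfs_trivial_for_Alice (G : game) : weakly_finitely_small G -> trivial_for_Alice G.
Proof. by move=> wfsG R runR; apply: NNPP => /(not_trivial_not_wfs runR). Qed.

Section NotFinite.
Variables (G : game) (F : nat -> nat -> gM G).
Hypotheses (F_run : forall n, isRun (gT G) (F n)) (F_inj : injective F).
Hypothesis G_trivial : trivial_for_Alice G.

Definition avoids_tail n (R : nat -> gM G) : Prop :=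
  isRun (gT G) R /\ forall m, n <= m -> R <> F m.

Lemma avoids_tail_run n R : avoids_tail n R -> isRun (gT G) R.
Proof. by case. Qed.

Lemma avoids_tail_mono n m R : n <= m -> avoids_tail n R -> avoids_tail m R.
Proof. by move=> le_nm [runR avR]; split=> // k le_mk; apply/avR/(leq_trans le_nm). Qed.

Definition avoid_game : game :=
  @union_game _ (fun=> gT G) avoids_tail (fun=> @gT_pref G) (fun=> @gT_ext G)
    avoids_tail_run (fun _ _ _ _ => id) (fun _ _ => id).

Definition avoid_hom : hom G avoid_game.
Proof.
refine (@Hom G avoid_game id _ _ _ _) => // R AR; exists R; split=> //.
have runR := gA_run AR.
have [[m ->]|notF] := classic (exists m, R = F m).
  by exists m.+1; split=> // k lt_mk /F_inj eq_mk; rewrite eq_mk ltnn in lt_mk.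
by exists 0; split=> // k _ eR; apply: notF; exists k.
Defined.

Lemma infinite_not_wfs : ~ weakly_finitely_small G.
Proof.
move=> /(wfs_hom_into_stage avoids_tail_mono) /(_ avoid_hom) [n [_ winA]].
have [R' [[_ avR'] eR']] := winA _ (G_trivial (F_run n)).
by apply: (avR' n (leqnn n)); apply: restr_inj => k; rewrite -eR'.
Qed.

End NotFinite.

Lemma wfs_finite_runs (G : game) : weakly_finitely_small G -> finite_runs G.
Proof.
move=> wfsG; apply: NNPP => /infinite_injective [F [F_run F_inj]].
exact: infinite_not_wfs F_run F_inj (wfs_trivial_for_Alice wfsG) wfsG.
Qed.

Section ChainPush.
Variable S : chain.
Local Notation node n := (gT (cobj S n)).
Local Notation push h := (hfun (cmap S h)).

Lemma push_eq_up n m p p' (x : seq (gM (cobj S n))) (y : seq (gM (cobj S m)))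
    (hn : n <= p) (hm : m <= p) (hn' : n <= p') (hm' : m <= p') :
  node n x -> node m y -> p <= p' -> push hn x = push hm y -> push hn' x = push hm' y.
Proof.
move=> nx ny le_pp' e.
by rewrite -(cmap_comp hn le_pp' hn' nx) e (cmap_comp hm le_pp' hm' ny).
Qed.

Definition identified n m (x : seq (gM (cobj S n))) (y : seq (gM (cobj S m))) : Prop :=
  [/\ node n x, node m y & exists p (hn : n <= p) (hm : m <= p), push hn x = push hm y].

Lemma identified_refl n (x : seq (gM (cobj S n))) : node n x -> identified x x.
Proof. by move=> nx; split=> //; exists n, (leqnn n), (leqnn n). Qed.

Lemma identified_sym n m (x : seq (gM (cobj S n))) (y : seq (gM (cobj S m))) :
  identified x y -> identified y x.
Proof. by move=> [nx ny [p [hn [hm e]]]]; split=> //; exists p, hm, hn. Qed.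

Lemma identified_trans n m l (x : seq (gM (cobj S n))) (y : seq (gM (cobj S m)))
    (z : seq (gM (cobj S l))) :
  identified x y -> identified y z -> identified x z.
Proof.
move=> [nx ny [p1 [hn [hm1 e1]]]] [_ nz [p2 [hm2 [hl e2]]]].
have [le_p1 le_p2] := (leq_maxl p1 p2, leq_maxr p1 p2).
split=> //; exists (maxn p1 p2), (leq_trans hn le_p1), (leq_trans hl le_p2).
rewrite (push_eq_up (leq_trans hn le_p1) (leq_trans hm1 le_p1) nx ny le_p1 e1).
exact: (push_eq_up _ _ ny nz le_p2 e2).
Qed.

Lemma identified_push n m (h : n <= m) (x : seq (gM (cobj S n))) :
  node n x -> identified (push h x) x.
Proof.
move=> nx; have npx := hom_T (cmap S h) nx.
by split=> //; exists m, (leqnn m), h; rewrite cmap_id.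
Qed.

End ChainPush.

Section ColimitStructure.
Variables (S : chain) (L : game) (q : forall n, hom (cobj S n) L).
Hypothesis q_colim : is_colimit q.
Local Notation node n := (gT (cobj S n)).
Local Notation stage_seq := {n : nat & seq (gM (cobj S n))}.

(* The class of a stage node, as a predicate on stage nodes; these classes are the moves of
   an explicit colimit of [S]. *)
Definition cls n (x : seq (gM (cobj S n))) : stage_seq -> Prop :=
  fun z => identified (projT2 z) x.

Lemma cls_eq n m (x : seq (gM (cobj S n))) (y : seq (gM (cobj S m))) :
  identified x y -> cls x = cls y.
Proof.
move=> xy; apply: functional_extensionality => z; apply: propositional_extensionality.
by split=> zx; [apply: identified_trans zx xy | apply: identified_trans zx (identified_sym xy)].
Qed.

Definition trace n (x : seq (gM (cobj S n))) : seq (stage_seq -> Prop) :=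
  mkseq (fun i => cls (take i.+1 x)) (size x).

Lemma size_trace n (x : seq (gM (cobj S n))) : size (trace x) = size x.
Proof. exact: size_mkseq. Qed.

Lemma trace_take n (x : seq (gM (cobj S n))) k : trace (take k x) = take k (trace x).
Proof.
rewrite /trace take_mkseq size_take_min; apply: eq_in_mkseq => i.
by rewrite leq_min => /andP[lt_ik _]; rewrite take_takel.
Qed.

Lemma trace_push n m (h : n <= m) (x : seq (gM (cobj S n))) :
  node n x -> trace (hfun (cmap S h) x) = trace x.
Proof.
move=> nx; rewrite /trace (hom_size (cmap S h) nx); apply: eq_in_mkseq => i _.
by rewrite -(hom_pref (cmap S h) i.+1 nx); apply/cls_eq/identified_push/gT_pref.
Qed.

Lemma trace_restr n (R : nat -> gM (cobj S n)) k :
  trace (restr R k) = restr (fun i => cls (restr R i.+1)) k.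
Proof. by rewrite /trace size_restr; apply: eq_in_mkseq => i lt_ik; rewrite take_restrl. Qed.

Lemma trace_inj n m (x : seq (gM (cobj S n))) (y : seq (gM (cobj S m))) :
  node n x -> node m y -> trace x = trace y -> identified x y.
Proof.
move=> nx ny exy; have sxy : size x = size y by rewrite -size_trace exy size_trace.
case sx: (size x) => [|k].
  have ey : y = [::] by apply/size0nil; rewrite -sxy.
  move/size0nil: sx => ex; subst x y; split=> //.
  exists (maxn n m), (leq_maxl n m), (leq_maxr n m).
  by rewrite (size0nil (hom_size (cmap S _) nx)) (size0nil (hom_size (cmap S _) ny)).
have := congr1 (nth (fun=> False) ^~ k) exy.
rewrite /trace !nth_mkseq -?sxy ?sx // !take_oversize -?sxy ?sx //.
by move=> /(congr1 (@^~ (existT _ n x))); rewrite /cls /= => <-; apply: identified_refl.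
Qed.

Definition trace_tree (s : seq (stage_seq -> Prop)) : Prop :=
  exists n (x : seq (gM (cobj S n))), node n x /\ trace x = s.
Definition trace_win (R : nat -> stage_seq -> Prop) : Prop :=
  exists n (R' : nat -> gM (cobj S n)), gA (cobj S n) R' /\ forall k, trace (restr R' k) = restr R k.

Lemma trace_tree_pref s k : trace_tree s -> trace_tree (take k s).
Proof. by move=> [n [x [nx <-]]]; exists n, (take k x); split; [apply: gT_pref | apply: trace_take]. Qed.

Lemma trace_tree_ext s : trace_tree s -> exists c, trace_tree (rcons s c).
Proof.
move=> [n [x [nx <-]]]; have [a nxa] := gT_ext nx.
exists (cls (rcons x a)), n, (rcons x a); split=> //.
rewrite /trace size_rcons mkseqS take_oversize ?size_rcons //; congr rcons.
by apply: eq_in_mkseq => i lt_ix; rewrite -cats1 takel_cat.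
Qed.

Lemma trace_win_run R : trace_win R -> isRun trace_tree R.
Proof. by move=> [n [R' [AR' e]]] k; exists n, (restr R' k); split=> //; apply: gA_run AR' k. Qed.

Definition trace_game : game := Game trace_tree_pref trace_tree_ext trace_win_run.

Definition trace_hom n : hom (cobj S n) trace_game.
Proof.
refine (@Hom (cobj S n) trace_game (@trace n) _ _ _ _) => //.
- by move=> t nt; exists n, t.
- by move=> t _; apply: size_trace.
- by move=> t k _; apply: trace_take.
- move=> R AR; exists (fun i => cls (restr R i.+1)); split; last exact: trace_restr.
  by exists n, R; split=> //; apply: trace_restr.
Defined.

Lemma trace_cocone : cocone trace_hom.
Proof. by move=> n m h t nt; apply: trace_push. Qed.

Let u_spec := constructive_indefinite_description _ (proj1 (q_colim.2 _ _ trace_cocone)).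
Let u : hom L trace_game := proj1_sig u_spec.

Lemma u_q n (x : seq (gM (cobj S n))) : node n x -> hfun u (hfun (q n) x) = trace x.
Proof. exact: (proj2_sig u_spec n x). Qed.

Lemma colimit_identified n m (x : seq (gM (cobj S n))) (y : seq (gM (cobj S m))) :
  node n x -> node m y -> hfun (q n) x = hfun (q m) y -> identified x y.
Proof. by move=> nx ny exy; apply: trace_inj => //; rewrite -u_q // exy u_q. Qed.

Lemma q_identified n m (x : seq (gM (cobj S n))) (y : seq (gM (cobj S m))) :
  identified x y -> hfun (q n) x = hfun (q m) y.
Proof.
move=> [nx ny [p [hn [hm e]]]].
by rewrite -(q_colim.1 n p hn x nx) -(q_colim.1 m p hm y ny) e.
Qed.

Definition untrace (s : seq (stage_seq -> Prop)) : seq (gM L) :=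
  match excluded_middle_informative (trace_tree s) with
  | left ts =>
      let n := constructive_indefinite_description _ ts in
      hfun (q (proj1_sig n)) (proj1_sig (constructive_indefinite_description _ (proj2_sig n)))
  | right _ => [::]
  end.

Lemma untrace_trace n (x : seq (gM (cobj S n))) : node n x -> untrace (trace x) = hfun (q n) x.
Proof.
move=> nx; rewrite /untrace; case: excluded_middle_informative => [ts|]; last first.
  by case; exists n, x.
case: (constructive_indefinite_description _ ts) => n' ex' /=.
case: (constructive_indefinite_description _ ex') => x' [nx' e] /=.
exact/q_identified/trace_inj.
Qed.

Definition untrace_hom : hom trace_game L.
Proof.
refine (@Hom trace_game L untrace _ _ _ _).
- by move=> s [n [x [nx <-]]]; rewrite untrace_trace //; apply: (hom_T (q n) nx).
- by move=> s [n [x [nx <-]]]; rewrite untrace_trace // (hom_size (q n) nx) size_trace.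
- move=> s k [n [x [nx <-]]]; rewrite -trace_take !untrace_trace //; last exact: gT_pref.
  exact: (hom_pref (q n) k nx).
- move=> R [n [R' [AR' e]]]; have [R'' [AR'' e']] := hom_A (q n) AR'.
  by exists R''; split=> // k; rewrite -e untrace_trace ?e' //; apply: gA_run AR' k.
Defined.

Lemma untrace_u t : gT L t -> untrace (hfun u t) = t.
Proof.
apply: ((q_colim.2 L q q_colim.1).2 (hom_comp u untrace_hom) (hom_id L)) => n x nx //=.
by rewrite u_q // untrace_trace.
Qed.

Lemma colimit_win_lift R : gA L R ->
  exists n (R' : nat -> gM (cobj S n)),
    gA (cobj S n) R' /\ forall k, hfun (q n) (restr R' k) = restr R k.
Proof.
move=> AR; have [Ru [[n [R' [AR' e]]] eu]] := hom_A u AR.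
exists n, R'; split=> // k; have nR'k := gA_run AR' k.
by rewrite -untrace_trace // e -eu untrace_u //; apply: gA_run AR k.
Qed.

End ColimitStructure.

Section FiniteFactor.
Variables (S : chain) (L : game) (q : forall n, hom (cobj S n) L).
Hypothesis q_colim : is_colimit q.
Variables (G : game) (f : hom G L) (rs : seq (nat -> gM G)).
Hypothesis rs_runs : forall R, isRun (gT G) R -> List.In R rs.
Hypothesis G_trivial : trivial_for_Alice G.
Local Notation push h := (hfun (cmap S h)).

Lemma eventually_runs (Q : (nat -> gM G) -> nat -> Prop) :
  (forall R, isRun (gT G) R -> eventually (Q R)) ->
  eventually (fun m => forall R, isRun (gT G) R -> Q R m).
Proof.
move=> ev_Q; have [m Q_in] : eventually (fun m => forall R, List.In R rs -> isRun (gT G) R -> Q R m).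
  apply: eventually_all_in => R _; have [/ev_Q [m Qm]|not_run] := classic (isRun (gT G) R).
    by exists m => m' /Qm.
  by exists 0.
by exists m => m' /Q_in Q_in' R runR; apply: Q_in' (rs_runs runR) runR.
Qed.

Definition lifts n (R : nat -> gM G) (R' : nat -> gM (cobj S n)) : Prop :=
  gA (cobj S n) R' /\ forall k, hfun (q n) (restr R' k) = hfun f (restr R k).
Arguments lifts : clear implicits.

Lemma run_lifts R : isRun (gT G) R -> exists n R', lifts n R R'.
Proof.
move=> runR; have [R1 [AR1 e1]] := hom_A f (G_trivial runR).
have [n [R' [AR' e]]] := colimit_win_lift q_colim AR1.
by exists n, R'; split=> // k; rewrite e e1.
Qed.

Definition lift R : option {n : nat & nat -> gM (cobj S n)} :=
  match excluded_middle_informative (exists n R', lifts n R R') with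
  | left ex =>
      let n := constructive_indefinite_description _ ex in
      Some (existT _ (proj1_sig n) (proj1_sig (constructive_indefinite_description _ (proj2_sig n))))
  | right _ => None
  end.

Lemma liftP R : isRun (gT G) R -> exists n R', lift R = Some (existT _ n R') /\ lifts n R R'.
Proof.
move=> runR; rewrite /lift; case: excluded_middle_informative => [ex|]; last first.
  by case; apply: run_lifts.
case: (constructive_indefinite_description _ ex) => n exn /=.
by case: (constructive_indefinite_description _ exn) => R' lR' /=; exists n, R'.
Qed.

Definition lift_stage R : nat := if lift R is Some (existT n _) then n else 0.

Definition push_to n m (x : seq (gM (cobj S n))) : seq (gM (cobj S m)) :=
  if decP (@idP (n <= m)) is left le_nm then push le_nm x else [::].

Lemma push_toE n m (le_nm : n <= m) (x : seq (gM (cobj S n))) : push_to m x = push le_nm x.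
Proof. by rewrite /push_to; case: decP => [h|]; [rewrite (bool_irrelevance h le_nm) | rewrite le_nm]. Qed.

(* The length-[d] prefix of the chosen lift of [R], pushed to stage [m]; junk [[::]] unless
   [lift_stage R <= m]. *)
Definition lift_at R m d : seq (gM (cobj S m)) :=
  if lift R is Some (existT n R') then push_to m (restr R' d) else [::].

Lemma lift_atP R m : isRun (gT G) R -> lift_stage R <= m ->
  exists R'', lifts m R R'' /\ forall d, lift_at R m d = restr R'' d.
Proof.
move=> /liftP [n [R' [lR [AR' eR']]]]; rewrite /lift_stage /lift_at lR => le_nm.
have [R'' [AR'' e'']] := hom_A (cmap S le_nm) AR'.
exists R''; split=> [|d]; last by rewrite push_toE e''.
by split=> // k; rewrite -e'' -eR' (q_colim.1 n m le_nm _ (gA_run AR' k)).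
Qed.

Lemma lift_at_agree R1 R2 : isRun (gT G) R1 -> isRun (gT G) R2 ->
  eventually (fun m => forall d, restr R1 d = restr R2 d -> lift_at R1 m d = lift_at R2 m d).
Proof.
move=> run1 run2; have [<-|neq] := classic (R1 = R2); first by exists 0.
have [d0 [e0 max0]] := restr_agree_max neq.
have [n1 [R1' [l1 [A1 e1]]]] := liftP run1; have [n2 [R2' [l2 [A2 e2]]]] := liftP run2.
have [nx1 nx2] := (gA_run A1 d0, gA_run A2 d0).
have eq_q : hfun (q n1) (restr R1' d0) = hfun (q n2) (restr R2' d0) by rewrite e1 e2 e0.
have [_ _ [p [h1 [h2 ep]]]] := colimit_identified q_colim nx1 nx2 eq_q.
exists p => m le_pm d /max0 le_dd0.
rewrite /lift_at l1 l2 (push_toE (leq_trans h1 le_pm)) (push_toE (leq_trans h2 le_pm)).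
rewrite -(take_restrl R1' le_dd0) -(take_restrl R2' le_dd0) !hom_pref //.
by congr take; apply: push_eq_up ep.
Qed.

(* Beyond this stage, lifts of runs sharing a prefix agree on it, so [factor_fun] below does not
   depend on the run chosen through a node. *)
Lemma lift_stage_bound : eventually (fun m => forall R1, isRun (gT G) R1 ->
  lift_stage R1 <= m /\
  forall R2, isRun (gT G) R2 -> forall d, restr R1 d = restr R2 d -> lift_at R1 m d = lift_at R2 m d).
Proof.
apply: eventually_runs => R1 run1; apply: eventually_and; first by exists (lift_stage R1).
by apply: eventually_runs => R2 run2; apply: lift_at_agree.
Qed.

Let N_spec := constructive_indefinite_description _ lift_stage_bound.
Let N : nat := proj1_sig N_spec.

Lemma N_bound R1 R2 : isRun (gT G) R1 -> isRun (gT G) R2 ->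
  lift_stage R1 <= N /\ forall d, restr R1 d = restr R2 d -> lift_at R1 N d = lift_at R2 N d.
Proof.
move=> run1 run2.
have [le_N agree] := proj2_sig N_spec N (leqnn N) R1 run1.
by split=> //; apply: agree.
Qed.

Definition factor_fun (t : seq (gM G)) : seq (gM (cobj S N)) :=
  match excluded_middle_informative (exists R, isRun (gT G) R /\ restr R (size t) = t) with
  | left ex => lift_at (proj1_sig (constructive_indefinite_description _ ex)) N (size t)
  | right _ => [::]
  end.

Lemma factor_fun_run R : isRun (gT G) R ->
  exists R'', lifts N R R'' /\ forall d, factor_fun (restr R d) = restr R'' d.
Proof.
move=> runR; have [R'' [lR'' eR'']] := lift_atP runR (N_bound runR runR).1.
exists R''; split=> // d; rewrite -eR'' /factor_fun size_restr.
case: excluded_middle_informative => [ex|]; last by case; exists R.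
case: (constructive_indefinite_description _ ex) => R0 [run0 e0] /=.
by apply: (N_bound run0 runR).2.
Qed.

Lemma factor_fun_node t : gT G t -> exists R (R'' : nat -> gM (cobj S N)),
  [/\ lifts N R R'', restr R (size t) = t & forall d, factor_fun (restr R d) = restr R'' d].
Proof.
move=> /node_on_run [R [runR eR]]; have [R'' [lR'' eR'']] := factor_fun_run runR.
by exists R, R''.
Qed.

Definition factor_hom : hom G (cobj S N).
Proof.
refine (@Hom G (cobj S N) factor_fun _ _ _ _).
- move=> t /factor_fun_node [R [R'' [[AR'' _] <- e]]].
  by rewrite e; apply: (gA_run AR'' (size t)).
- by move=> t /factor_fun_node [R [R'' [_ <- e]]]; rewrite e !size_restr.
- move=> t k /factor_fun_node [R [R'' [_ eR e]]].
  by rewrite -eR take_restr !e take_restr.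
- by move=> R /gA_run /factor_fun_run [R'' [[AR'' _] e]]; exists R''.
Defined.

Lemma factor_hom_comp : comp_eq factor_hom (q N) f.
Proof. by move=> t /factor_fun_node [R [R'' [[_ qR''] <- e]]]; rewrite /= e qR''. Qed.

End FiniteFactor.

Lemma finite_trivial_wfs (G : game) :
  finite_runs G -> trivial_for_Alice G -> weakly_finitely_small G.
Proof.
move=> [rs rs_runs] G_trivial S L q q_colim f.
by eexists; eexists; apply: (factor_hom_comp q_colim f rs_runs G_trivial).
Qed.

Theorem mainTheorem8 (G : game) :
  weakly_finitely_small G <-> (finite_runs G /\ trivial_for_Alice G).
Proof.
split=> [wfsG|[finG trivG]]; last exact: finite_trivial_wfs.
by split; [apply: wfs_finite_runs | apply: wfs_trivial_for_Alice].
Qed.
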